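(* Let $\Omega\subset\mathbb R^m$ be an open, bounded, convex set and let $h:\mathbb R^k\times\Omega\to\mathbb R$ be continuous, such that for each $\mathcal X\in\mathbb R^k$ the function $h(\mathcal X,\cdot)$ is concave on $\Omega$. Then $H(\mathcal X):=\sup_{\tau\in\Omega}h(\mathcal X,\tau)$ is continuous on $\mathbb R^k$. *)

From HB Require Import structures.
From mathcomp Require Import all_boot all_order all_algebra.
From mathcomp Require Import all_classical all_reals all_analysis.
Set Implicit Arguments. Unset Strict Implicit. Unset Printing Implicit Defensive.
Import Order.TTheory GRing.Theory Num.Theory.
Import numFieldNormedType.Exports.
Local Open Scope classical_set_scope.
Local Open Scope ring_scope.

Definition convex_in (R : realType) (m : nat) (A : set 'rV[R]_m) : Prop :=
  forall (x y : 'rV[R]_m) (l : R), A x -> A y -> 0 <= l -> l <= 1 ->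
    A (l *: x + (1 - l) *: y).

Definition concave_on (R : realType) (m : nat) (A : set 'rV[R]_m)
    (f : 'rV[R]_m -> R) : Prop :=
  forall (x y : 'rV[R]_m) (l : R), A x -> A y -> 0 <= l -> l <= 1 ->
    l * f x + (1 - l) * f y <= f (l *: x + (1 - l) *: y).

From HB Require Import structures.
From mathcomp Require Import all_boot all_order all_algebra.
From mathcomp Require Import all_classical all_reals all_analysis.
From mathcomp Require Import ring lra.
Import Order.TTheory GRing.Theory Num.Theory.
Import numFieldNormedType.Exports.
Local Open Scope classical_set_scope.
Local Open Scope ring_scope.

(* Fix a point a of Omega. By concavity, (1 - d) h(X, t) is at most
   h(X, d a + (1 - d) t) - d h(X, a), and for 0 < d <= 1 the points
   d a + (1 - d) t with t in the closure of Omega form a compact subset K_d of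
   Omega. So sup_Omega h(X, .) is finite, and since h(., s) -> h(X0, s)
   uniformly on K_d (tube lemma), H is upper semicontinuous up to an error
   that vanishes with d. Being a supremum of continuous functions, H is also
   lower semicontinuous. *)

Lemma bounded_closure {R : realFieldType} {V : normedModType R} {A : set V} :
  bounded_set A -> bounded_set (closure A).
Proof.
rewrite /= /bounded_near; apply: filterS => M AM.
apply: subset_trans (closureS AM) _.
have -> : [set x : V | `|x| <= M] = closed_ball_ Num.norm 0 M.
  by apply/seteqP; split => x; rewrite /closed_ball_ /= sub0r normrN.
by move: (@closed_closed_ball_ _ V 0 M); rewrite closure_id => <-.
Qed.

Lemma open_preimage_snd {X T : topologicalType} {A : set T} :
  open A -> open [set p : X * T | A p.2].
Proof.
rewrite !openE => oA [x t] /= At.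
by exists (setT, A) => [|[? ?] []] //=; split; [exact: filterT | exact: oA].
Qed.

Lemma compact_near_uniform {R : realFieldType} {X T : topologicalType}
    (f : X -> T -> R) {K : set T} (x0 : X) :
  compact K ->
  (forall s, K s -> {for (x0, s), continuous (fun p : X * T => f p.1 p.2)}) ->
  forall e, 0 < e -> \forall x \near x0, forall s, K s -> `|f x0 s - f x s| < e.
Proof.
move=> /compact_near_coveringP cK fc e e0.
apply: (cK _ _ (fun x s => `|f x0 s - f x s| < e)) => s Ks.
have /cvgrPdist_lt/(_ (e / 2)) := fc s Ks.
case=> [|[U V] /= [Ux0 Vs] UV]; first by rewrite divr_gt0.
exists (V, U) => [//|[s' x] /= [Vs' Ux]].
have := UV (x, s') (conj Ux Vs').
have := UV (x0, s') (conj (nbhs_singleton Ux0) Vs').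
rewrite /= !ltr_norml; lra.
Qed.

Lemma sup_image_lsc {R : realType} {I : Type} {T : topologicalType}
    (f : T -> I -> R) (A : set I) (x0 : T) :
  (forall x, has_sup [set f x i | i in A]) ->
  (forall i, A i -> {for x0, continuous (f^~ i)}) ->
  forall e, 0 < e ->
    \forall x \near x0,
      sup [set f x0 i | i in A] - e < sup [set f x i | i in A].
Proof.
move=> hs fc e e0; have e20 : 0 < e / 2 by rewrite divr_gt0.
have [_ [i Ai <-] supi] := sup_adherent e20 (hs x0).
have /cvgrPdist_lt/(_ _ e20) := fc i Ai.
apply: filterS => x fxi.
have : f x i <= sup [set f x i | i in A].
  by apply: (sup_upper_bound (hs x)); exists i.
move: fxi; rewrite ltr_norml; lra.
Qed.

Lemma continuous_at_lsc_usc {R : realFieldType} {T : topologicalType}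
    (f : T -> R) (x0 : T) :
  (forall e, 0 < e -> \forall x \near x0, f x0 - e < f x) ->
  (forall e, 0 < e -> \forall x \near x0, f x <= f x0 + e) ->
  {for x0, continuous f}.
Proof.
move=> flo fup; apply/cvgrPdist_lt => e e0.
have e20 : 0 < e / 2 by rewrite divr_gt0.
near=> x.
have lo : f x0 - e < f x by near: x; exact: flo.
have up : f x <= f x0 + e / 2 by near: x; exact: fup.
by rewrite ltr_norml; apply/andP; split; lra.
Unshelve. all: by end_near.
Qed.

Section ContractTo.
Context {R : realType} {m : nat}.
Implicit Types (A : set 'rV[R]_m) (a t : 'rV[R]_m) (d : R).

Definition contract_to a d t : 'rV[R]_m := d *: a + (1 - d) *: t.

Lemma contract_to_center a d : contract_to a d a = a.
Proof. by rewrite /contract_to -scalerDl addrC subrK scale1r. Qed.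

Lemma continuous_contract_to a d : continuous (contract_to a d).
Proof.
move=> t; apply: (@continuousD _ _ _ (cst (d *: a)) ((1 - d) \*: id)).
  exact: cst_continuous.
exact/continuousZl_tmp/cvg_id.
Qed.

Lemma compact_contract_to_closure {A} a d :
  bounded_set A -> compact (contract_to a d @` closure A).
Proof.
move=> bA; apply: continuous_compact.
  exact/continuous_subspaceT/continuous_contract_to.
apply: bounded_closed_compact; first exact: bounded_closure.
exact: closed_closure.
Qed.

Lemma contract_to_closure_sub {A a d} :
  open A -> convex_in A -> A a -> 0 < d -> d <= 1 ->
  contract_to a d @` closure A `<=` A.
Proof.
move=> oA cA Aa d0 d1 _ [t clt <-].
have /nbhs_ballP[r /= r0 arA] : nbhs a A.
  by move: oA; rewrite openE => /(_ a Aa).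
have [t' [At' tt']] := clt _ (nbhsx_ballx t (r * d) (mulr_gt0 r0 d0)).
move: tt'; rewrite -ball_normE /= => tt'.
(* trade t for a nearby t' in A and a for a point z near a *)
pose z := a + ((1 - d) / d) *: (t - t').
have -> : contract_to a d t = d *: z + (1 - d) *: t'.
  rewrite /contract_to /z scalerDr scalerA mulrCA divff ?gt_eqF // mulr1.
  by rewrite scalerBr addrA addrNK.
apply: cA => //; last by lra.
apply: arA; rewrite -ball_normE /= /z opprD addrA subrr add0r normrN normrZ.
rewrite ger0_norm ?divr_ge0 ?subr_ge0 ?(ltW d0) // mulrAC ltr_pdivrMr //.
have : 0 <= `|t - t'| by [].
nra.
Qed.

End ContractTo.

Section SupOfConcave.
Context {R : realType} {m k : nat} {Omega : set 'rV[R]_m}.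
Context {h : 'rV[R]_k -> 'rV[R]_m -> R} {a : 'rV[R]_m}.
Hypotheses (oO : open Omega) (bO : bounded_set Omega) (cO : convex_in Omega).
Hypothesis Oa : Omega a.
Hypothesis hc : forall X s, Omega s ->
  {for (X, s), continuous (fun p : 'rV[R]_k * 'rV[R]_m => h p.1 p.2)}.
Hypothesis hconc : forall X, concave_on Omega (h X).

Lemma continuous_h_snd X s : Omega s -> {for s, continuous (h X)}.
Proof.
move=> Os; have pc : {for s, continuous (fun s => (X, s))}.
  exact: (cvg_pair (F := nbhs s) (G := nbhs X) (H := nbhs s)
    (cvg_cst X) cvg_id).
exact: (continuous_comp pc (hc X s Os)).
Qed.

Lemma continuous_h_fst t X : Omega t -> {for X, continuous (h^~ t)}.
Proof.
move=> Ot; have pc : {for X, continuous (fun X => (X, t))}.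
  exact: (cvg_pair (F := nbhs X) (G := nbhs X) (H := nbhs t)
    cvg_id (cvg_cst t)).
exact: (continuous_comp pc (hc X t Ot)).
Qed.

Lemma has_sup_h X : has_sup [set h X t | t in Omega].
Proof.
have d0 : 0 < 1 / 2 :> R by lra.
have d1 : 1 / 2 <= 1 :> R by lra.
set K := contract_to a (1 / 2) @` closure Omega.
have KO : K `<=` Omega := contract_to_closure_sub oO cO Oa d0 d1.
have hK : {within K, continuous (h X)}.
  by apply: continuous_in_subspaceT => s /set_mem /KO; exact: continuous_h_snd.
have [B [_]] :=
  compact_bounded (continuous_compact hK (compact_contract_to_closure a _ bO)).
move=> /(_ (B + 1)); rewrite ltrDl => /(_ ltr01) hB.
split; first by exists (h X a), a.
exists (2 * (B + 1) - h X a) => _ [t Ot <-].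
have := hconc X a t (1 / 2) Oa Ot (ltW d0) d1.
have /ler_normlW : `|h X (contract_to a (1 / 2) t)| <= B + 1.
  apply: hB; exists (contract_to a (1 / 2) t) => //.
  by exists t => //; exact: subset_closure.
rewrite /contract_to; lra.
Qed.

Lemma sup_concave_usc X0 e : 0 < e ->
  \forall X \near X0,
    sup [set h X t | t in Omega] <= sup [set h X0 t | t in Omega] + e.
Proof.
move=> e0; set H0 := sup _.
have aH0 : h X0 a <= H0 by apply: (sup_upper_bound (has_sup_h X0)); exists a.
(* contracting towards a by the ratio d costs d * (H0 - h X0 a + e) = e / 4 *)
pose d := e / (4 * (H0 - h X0 a + e)).
have d0 : 0 < d by rewrite divr_gt0 // mulr_gt0 //; lra.
have dH0 : d * (H0 - h X0 a + e) = e / 4 by rewrite /d; field; lra.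
have d1 : d <= 1 / 4 by nra.
have d1' : d <= 1 by lra.
set K := contract_to a d @` closure Omega.
have KO : K `<=` Omega := contract_to_closure_sub oO cO Oa d0 d1'.
have Ka : K a by exists a; [exact: subset_closure | exact: contract_to_center].
have e8 : 0 < e / 8 by rewrite divr_gt0.
have := compact_near_uniform h X0 (compact_contract_to_closure a d bO)
  (fun s Ks => hc X0 s (KO s Ks)) _ e8.
apply: filterS => X hK; apply: ge_sup; first by exists (h X a), a.
move=> _ [t Ot <-].
have Kt : K (contract_to a d t) by exists t => //; exact: subset_closure.
have hconcX := hconc X a t d Oa Ot (ltW d0) d1'.
have htH0 : h X0 (contract_to a d t) <= H0.
  apply: (sup_upper_bound (has_sup_h X0)).
  by exists (contract_to a d t); [exact: KO|].
rewrite -(@ler_pM2l _ (1 - d)); last by lra.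
move: (hK _ Kt) (hK _ Ka) hconcX; rewrite !ltr_norml /contract_to.
move=> /andP[? ?] /andP[? ?]; nra.
Qed.

End SupOfConcave.

Theorem proposition7p1 (R : realType) (m k : nat) (Omega : set 'rV[R]_m)
  (h : 'rV[R]_k -> 'rV[R]_m -> R) :
  open Omega -> bounded_set Omega -> convex_in Omega ->
  {within [set p : 'rV[R]_k * 'rV[R]_m | Omega p.2],
     continuous (fun p : 'rV[R]_k * 'rV[R]_m => h p.1 p.2)} ->
  (forall X : 'rV[R]_k, concave_on Omega (h X)) ->
  continuous (fun X : 'rV[R]_k => sup [set h X t | t in Omega]).
Proof.
move=> oO bO cO hc hconc.
have [->|/set0P[a Oa]] := eqVneq Omega set0.
  by under eq_fun do rewrite image_set0 sup0; exact: cst_continuous.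
have {}hc X s : Omega s ->
    {for (X, s), continuous (fun p : 'rV[R]_k * 'rV[R]_m => h p.1 p.2)}.
  move=> Os; move: hc; rewrite continuous_open_subspace.
    by apply; rewrite inE.
  exact: open_preimage_snd.
move=> X0; apply: continuous_at_lsc_usc.
- apply: sup_image_lsc => [X|t Ot].
    exact: has_sup_h oO bO cO Oa hc hconc X.
  exact: continuous_h_fst hc t X0 Ot.
- exact: sup_concave_usc oO bO cO Oa hc hconc X0.
Qed.
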